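(* Let $X$ be a complex Banach space and let $\{S_h\},\{T_h\}\in C_b((0,1],B(X))$ be asymptotically quasinilpotent equivalent. Then $Sp(\{T_h\})=Sp(\{S_h\})$.
   Context: $B(X)$ is the algebra of bounded linear operators on $X$. $C_b((0,1],B(X))$ denotes the set of families $\{T_h\}_{h\in(0,1]}\subset B(X)$ with $\sup_h\|T_h\|<\infty$. For $T,S\in B(X)$, $(T-S)^{[n]}=\sum_{k=0}^{n}(-1)^{n-k}\binom{n}{k}T^kS^{n-k}$. Families $\{S_h\},\{T_h\}$ are asymptotically quasinilpotent equivalent if $\lim_{n\to\infty}\big(\limsup_{h\to0}\|(S_h-T_h)^{[n]}\|\big)^{1/n}=\lim_{n\to\infty}\big(\limsup_{h\to0}\|(T_h-S_h)^{[n]}\|\big)^{1/n}=0$. The resolvent set of $\{S_h\}$ is $r(\{S_h\})=\{\lambda\in\mathbb{C}:\ \exists\{\mathcal{R}(\lambda,S_h)\}\in C_b((0,1],B(X))$ with $\lim_{h\to0}\|(\lambda I-S_h)\mathcal{R}(\lambda,S_h)-I\|=\lim_{h\to0}\|\mathcal{R}(\lambda,S_h)(\lambda I-S_h)-I\|=0\}$, and the spectrum is $Sp(\{S_h\})=\mathbb{C}\setminus r(\{S_h\})$. *)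

From HB Require Import structures.
From mathcomp Require Import all_boot all_order all_algebra.
From mathcomp Require Import all_classical all_reals all_analysis.
From mathcomp Require Import complex.
Import Order.TTheory GRing.Theory Num.Theory.
Import numFieldNormedType.Exports.
Local Open Scope classical_set_scope.
Local Open Scope ring_scope.

Set Implicit Arguments.
Unset Strict Implicit.
Unset Printing Implicit Defensive.

Section Defs.
Variables (R : realType) (X : completeNormedModType R[i]).

(* real-valued norm on X (the norm of mathcomp is R[i]-valued, with zero
   imaginary part) *)
Definition nrm (x : X) : R := complex.Re `|x|.

Definition bounded_op (T : X -> X) : Prop :=
  (forall (a : R[i]) (x y : X), T (a *: x + y) = a *: T x + T y) /\
  continuous T.

Definition opnorm (T : X -> X) : R :=
  sup [set nrm (T x) | x in [set x : X | nrm x <= 1]].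

(* families indexed by h in (0,1] are functions R -> (X -> X), only the values
   on (0,1] matter. C_b((0,1], B(X)) *)
Definition Cb (F : R -> X -> X) : Prop :=
  (forall h : R, 0 < h <= 1 -> bounded_op (F h)) /\
  exists M : R, forall h : R, 0 < h <= 1 -> opnorm (F h) <= M.

Definition qdiff (n : nat) (T S : X -> X) : X -> X :=
  fun x => \sum_(k < n.+1)
     (((-1) ^+ (n - k) * ('C(n, k))%:R) : R[i]) *: iter k T (iter (n - k) S x).

Definition limsup0 (f : R -> R) : R :=
  inf [set sup [set f h | h in [set h : R | 0 < h < d]] | d in [set d : R | 0 < d <= 1]].

Definition aqn_one_side (S T : R -> X -> X) : Prop :=
  (fun n : nat => limsup0 (fun h => opnorm (qdiff n (S h) (T h))) `^ (n%:R)^-1)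
    @ \oo --> (0 : R).

Definition asympt_quasinilp_equiv (S T : R -> X -> X) : Prop :=
  aqn_one_side S T /\ aqn_one_side T S.

Definition in_resolvent (S : R -> X -> X) (l : R[i]) : Prop :=
  exists Rl : R -> X -> X, Cb Rl /\
    (fun h => opnorm (fun x => l *: Rl h x - S h (Rl h x) - x)) @ 0^'+ --> (0 : R) /\
    (fun h => opnorm (fun x => Rl h (l *: x - S h x) - x)) @ 0^'+ --> (0 : R).

Definition Sp (S : R -> X -> X) : set R[i] := ~` [set l | in_resolvent S l].

End Defs.

(* Let R_h be an approximate inverse of l - S_h and D_n := (S_h - T_h)^[n].
   The recurrence D_(n+1) = S_h D_n - D_n T_h reads D_n (l - T_h) =
   (l - S_h) D_n + D_(n+1), so the partial sums sum_(n <= N) (-1)^n R_h^(n+1) D_n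
   of a Neumann-type series telescope: composed with l - T_h they differ from
   the identity by (-1)^N R_h^(N+1) D_(N+1) plus terms controlled by
   R_h (l - S_h) - 1.  Asymptotic quasinilpotence gives ||D_n|| <= Lam rho^n
   for h near 0, with rho = 1 / (2 sup ||R_h||), so this defect is at most
   Lam 2^-(N+1) + 2 Lam ||R_h (l - S_h) - 1||, and letting N grow slowly as
   h -> 0 yields a left approximate inverse of l - T_h.  The sums
   sum_(n <= N) (T_h - S_h)^[n] R_h^(n+1) give a right one in the same way, and
   a left and a right approximate inverse of the same family are asymptotically
   equal, so l is in the resolvent set of {T_h}.  The hypothesis is symmetric
   in S and T. *)

From HB Require Import structures.
From mathcomp Require Import all_boot all_order all_algebra.
From mathcomp Require Import all_classical all_reals all_analysis.
From mathcomp Require Import complex.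
From mathcomp Require Import ring lra.
Import Order.TTheory GRing.Theory Num.Theory.
Import numFieldNormedType.Exports.
Local Open Scope complex_scope.
Local Open Scope classical_set_scope.
Local Open Scope ring_scope.
Set Implicit Arguments.
Unset Strict Implicit.
Unset Printing Implicit Defensive.

Section Norms.
Variables (R : realType) (X : completeNormedModType R[i]).

Definition cnorm (a : R[i]) : R := complex.Re `|a|.

Lemma ge0_ReE (z : R[i]) : 0 <= z -> z = (complex.Re z)%:C.
Proof. by move=> /ger0_Im; case: z => a b /= ->. Qed.

Lemma nrmE (x : X) : `|x| = (nrm x)%:C.
Proof. exact/ge0_ReE/normr_ge0. Qed.

Lemma cnormE (a : R[i]) : `|a| = (cnorm a)%:C.
Proof. exact/ge0_ReE/normr_ge0. Qed.

Lemma nrm_ge0 (x : X) : 0 <= nrm x.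
Proof. by have := normr_ge0 x; rewrite lecE => /andP[]. Qed.

Lemma cnorm_ge0 (a : R[i]) : 0 <= cnorm a.
Proof. by have := normr_ge0 a; rewrite lecE => /andP[]. Qed.

Lemma nrm0 : nrm (0 : X) = 0.
Proof. by rewrite /nrm normr0. Qed.

Lemma nrm_eq0 (x : X) : nrm x = 0 -> x = 0.
Proof. by move=> x0; apply/normr0_eq0; rewrite nrmE x0. Qed.

Lemma nrmN (x : X) : nrm (- x) = nrm x.
Proof. by rewrite /nrm normrN. Qed.

Lemma nrmD (x y : X) : nrm (x + y) <= nrm x + nrm y.
Proof. by have := ler_normD x y; rewrite !nrmE -rmorphD lecR. Qed.

Lemma nrmZ (a : R[i]) (x : X) : nrm (a *: x) = cnorm a * nrm x.
Proof. by rewrite /nrm normrZ cnormE nrmE -rmorphM. Qed.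

Lemma cnormR (r : R) : cnorm r%:C = `|r|.
Proof. by rewrite /cnorm normc_def /= expr0n /= addr0 sqrtr_sqr. Qed.

Lemma cnormN1X n : cnorm ((-1) ^+ n) = 1.
Proof. by rewrite /cnorm normrX normrN1 expr1n. Qed.

End Norms.

Section LinearFun.
Variables (R : realType) (X : completeNormedModType R[i]).
Variables (F : X -> X) (lF : linear F).

Let Flin : {linear X -> X} := HB.pack F (GRing.isLinear.Build R[i] X X *:%R F lF).

Lemma lin0 : F 0 = 0. Proof. exact: (linear0 Flin). Qed.
Lemma linD x y : F (x + y) = F x + F y. Proof. exact: (linearD Flin). Qed.
Lemma linB x y : F (x - y) = F x - F y. Proof. exact: (linearB Flin). Qed.
Lemma linZ a x : F (a *: x) = a *: F x. Proof. exact: (linearZZ Flin). Qed.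
Lemma lin_sum n (f : 'I_n -> X) : F (\sum_(i < n) f i) = \sum_(i < n) F (f i).
Proof. exact: (linear_sum Flin). Qed.

Lemma linear_continuous c : (forall x, nrm (F x) <= c * nrm x) -> continuous F.
Proof.
move=> Fc; have -> : F = Flin by [].
apply/linear_bounded_continuous/linear_boundedP.
exists (Num.max c 0)%:C; split; first by rewrite realE ler0c le_max lexx orbT.
move=> r cr x; rewrite nrmE [`|x|]nrmE.
apply: (le_trans _ (ler_wpM2r _ (ltW cr))); last by rewrite ler0c nrm_ge0.
rewrite -rmorphM lecR (le_trans (Fc x)) // ler_wpM2r ?nrm_ge0 //.
by rewrite le_max lexx.
Qed.

Lemma linear_bounded : continuous F -> exists c, forall x, nrm (F x) <= c * nrm x.
Proof.
move=> cF; have : continuous Flin by [].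
move/linear_bounded_continuous/linear_boundedP/pinfty_ex_gt0 => [r r0 Fr].
exists (complex.Re r) => x; have := Fr x.
by rewrite nrmE [`|x|]nrmE (ge0_ReE (ltW r0)) -rmorphM lecR.
Qed.

End LinearFun.

Section BoundedLinear.
Variables (R : realType) (X : completeNormedModType R[i]).
Implicit Types (F G : X -> X) (a : R[i]) (c d : R).

Definition bounded_linear F c := linear F /\ forall x, nrm (F x) <= c * nrm x.

Lemma bounded_linear_le F c d : c <= d -> bounded_linear F c -> bounded_linear F d.
Proof.
move=> cd [lF Fc]; split=> // x.
by rewrite (le_trans (Fc x)) // ler_wpM2r ?nrm_ge0.
Qed.

Lemma eq_bounded_linear F G c : G =1 F -> bounded_linear F c -> bounded_linear G c.
Proof. by move=> /funext ->. Qed.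

Lemma bounded_linear_id : bounded_linear id 1.
Proof. by split=> // x; rewrite mul1r. Qed.

Lemma bounded_linear0 : bounded_linear (fun=> 0) 0.
Proof. by split=> [a x y|x]; rewrite ?scaler0 ?addr0 // nrm0 mul0r. Qed.

Lemma bounded_linear_comp F G c d : 0 <= c ->
  bounded_linear F c -> bounded_linear G d -> bounded_linear (fun x => F (G x)) (c * d).
Proof.
move=> c0 [lF Fc] [lG Gd]; split=> [a x y|x]; first by rewrite lG lF.
by rewrite (le_trans (Fc _)) // -mulrA ler_wpM2l.
Qed.

Lemma bounded_linearD F G c d : bounded_linear F c -> bounded_linear G d ->
  bounded_linear (fun x => F x + G x) (c + d).
Proof.
move=> [lF Fc] [lG Gd]; split=> [a x y|x]; first by rewrite lF lG scalerDr addrACA.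
by rewrite (le_trans (nrmD _ _)) // mulrDl lerD.
Qed.

Lemma bounded_linearN F c : bounded_linear F c -> bounded_linear (fun x => - F x) c.
Proof.
by move=> [lF Fc]; split=> [a x y|x]; rewrite ?lF ?opprD ?scalerN ?nrmN.
Qed.

Lemma bounded_linearB F G c d : bounded_linear F c -> bounded_linear G d ->
  bounded_linear (fun x => F x - G x) (c + d).
Proof. by move=> bF /bounded_linearN; apply: bounded_linearD. Qed.

Lemma bounded_linearZ F c a : bounded_linear F c ->
  bounded_linear (fun x => a *: F x) (cnorm a * c).
Proof.
move=> [lF Fc]; split=> [b x y|x]; first by rewrite lF scalerDr !scalerA mulrC.
by rewrite nrmZ -mulrA ler_wpM2l ?cnorm_ge0.
Qed.

Lemma bounded_linear_iter F c n : 0 <= c -> bounded_linear F c ->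
  bounded_linear (iter n F) (c ^+ n).
Proof.
move=> c0 bF; elim: n => [|n IH]; first exact: bounded_linear_id.
by rewrite exprS; apply: (bounded_linear_comp c0 bF IH).
Qed.

Lemma bounded_linear_sum n (F : 'I_n -> X -> X) (c : 'I_n -> R) :
  (forall i, bounded_linear (F i) (c i)) ->
  bounded_linear (fun x => \sum_(i < n) F i x) (\sum_(i < n) c i).
Proof.
elim: n F c => [|n IH] F c bF.
  by under eq_fun do rewrite big_ord0; rewrite big_ord0; exact: bounded_linear0.
under eq_fun do rewrite big_ord_recr; rewrite big_ord_recr.
exact: bounded_linearD (IH _ _ (fun i => bF (widen_ord (leqnSn n) i))) (bF ord_max).
Qed.

Lemma opnorm_ge0 F : 0 <= opnorm F.
Proof.
rewrite /opnorm; set E := (X in sup X).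
have [ubE|] := pselect (has_ubound E); last by move=> noub; rewrite sup_out // => -[].
apply: le_trans (nrm_ge0 (F 0)) (ub_le_sup ubE _).
by exists 0 => //; rewrite /= nrm0 ler01.
Qed.

Lemma opnorm_le F c : 0 <= c -> bounded_linear F c -> opnorm F <= c.
Proof.
move=> c0 [_ Fc]; apply: ge_sup.
  by exists (nrm (F 0)), 0 => //; rewrite /= nrm0 ler01.
by move=> _ [x /= x1 <-]; rewrite (le_trans (Fc x)) // ler_piMr.
Qed.

Lemma opnorm_ge0_le F c : 0 <= c -> bounded_linear F c -> 0 <= opnorm F <= c.
Proof. by move=> c0 bF; rewrite opnorm_ge0 opnorm_le. Qed.

Lemma bounded_linear_opnorm F c : bounded_linear F c -> bounded_linear F (opnorm F).
Proof.
move=> [lF Fc]; split=> // x.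
have ubF : has_ubound [set nrm (F y) | y in [set y : X | nrm y <= 1]].
  exists (Num.max c 0) => _ [y /= y1 <-]; rewrite (le_trans (Fc y)) //.
  have [c0|c0] := leP 0 c; first by rewrite ler_piMr.
  by rewrite (le_trans (mulr_le0_ge0 (ltW c0) (nrm_ge0 y))) // le_max lexx orbT.
have [x0|x0] := eqVneq (nrm x) 0.
  by rewrite (nrm_eq0 x0) (lin0 lF) nrm0 mulr0.
have xpos : 0 < nrm x by rewrite lt0r x0 nrm_ge0.
have nrmV : cnorm ((nrm x)^-1)%:C = (nrm x)^-1.
  by rewrite cnormR ger0_norm ?invr_ge0 ?nrm_ge0.
have : nrm (F (((nrm x)^-1)%:C *: x)) <= opnorm F.
  rewrite /opnorm; apply: ub_le_sup ubF _ _; exists (((nrm x)^-1)%:C *: x) => //=.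
  by rewrite nrmZ nrmV mulVf.
by rewrite (linZ lF) nrmZ nrmV ler_pdivrMl // mulrC.
Qed.

Lemma bounded_linear_defect F c : bounded_linear F c ->
  bounded_linear (fun x => F x - x) (opnorm (fun x => F x - x)).
Proof.
by move=> bF; move: (bounded_linearB bF bounded_linear_id) => /bounded_linear_opnorm.
Qed.

Lemma bounded_opP F : bounded_op F <-> exists c, bounded_linear F c.
Proof.
split=> [[lF /(linear_bounded lF) [c Fc]]|[c [lF Fc]]]; first by exists c.
by split=> //; apply: linear_continuous Fc.
Qed.

Lemma Cb_bounded_linear (S : R -> X -> X) : Cb S ->
  exists2 K, 0 < K & forall h, 0 < h <= 1 -> bounded_linear (S h) K.
Proof.
move=> [bS [K SK]]; exists (Num.max K 1) => [|h h01]; first by rewrite lt_max ltr01 orbT.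
have [c /bounded_linear_opnorm bSh] := (bounded_opP _).1 (bS h h01).
by apply: bounded_linear_le bSh; rewrite le_max SK.
Qed.

Lemma bounded_linear_Cb (G : R -> X -> X) C : 0 <= C ->
  (forall h, 0 < h <= 1 -> bounded_linear (G h) C) -> Cb G.
Proof.
move=> C0 bG; split=> [h /bG bGh|]; first by apply/bounded_opP; exists C.
by exists C => h /bG /(opnorm_le C0).
Qed.

End BoundedLinear.

Lemma telescope_alt (K : pzRingType) (V : lmodType K) (u : nat -> V) N :
  \sum_(n < N.+1) (-1) ^+ n *: (u n + u n.+1) = u 0%N + (-1) ^+ N *: u N.+1.
Proof.
elim: N => [|N IH]; first by rewrite big_ord1 !scale1r.
by rewrite big_ord_recr /= IH exprS mulN1r !scaleNr scalerDr opprD addrA addrK.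
Qed.

Lemma telescope_sub (V : zmodType) (u : nat -> V) N :
  \sum_(n < N) (u n - u n.+1) = u 0%N - u N.
Proof.
elim: N => [|N IH]; first by rewrite big_ord0 subrr.
by rewrite big_ord_recr /= IH addrA subrK.
Qed.

Section QuasiDifference.
Variables (R : realType) (X : completeNormedModType R[i]).
Implicit Types (S T : X -> X) (a b : R).

Lemma linear_iter S n : linear S -> linear (iter n S).
Proof. by move=> lS; elim: n => // n IH a x y /=; rewrite IH lS. Qed.

Lemma qdiff0 S T x : qdiff 0 S T x = x.
Proof. by rewrite /qdiff big_ord1 mulr1 scale1r. Qed.

Lemma linear_qdiff S T n : linear S -> linear T -> linear (qdiff n S T).
Proof.
move=> lS lT a x y; rewrite /qdiff scaler_sumr -big_split; apply: eq_bigr => k _ /=.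
by rewrite (linear_iter _ lT) (linear_iter _ lS) scalerDr !scalerA mulrC.
Qed.

Lemma qdiffS S T n x : linear S ->
  qdiff n.+1 S T x = S (qdiff n S T x) - qdiff n S T (T x).
Proof.
move=> lS.
pose a (k : nat) : R[i] := (-1) ^+ (n - k) * ('C(n, k))%:R.
pose b (k : nat) : R[i] := (-1) ^+ (n - k) * ('C(n, k.+1))%:R.
pose u (k : nat) : X := iter k.+1 S (iter (n - k) T x).
have E1 : qdiff n.+1 S T x = ((-1) ^+ n.+1) *: iter n.+1 T x +
    \sum_(k < n.+1) b k *: u k + \sum_(k < n.+1) a k *: u k.
  rewrite /qdiff big_ord_recl /= subn0 bin0 mulr1 -addrA -big_split /=.
  congr (_ + _); apply: eq_bigr => k _ /=.
  by rewrite /bump /= add1n subSS binS natrD mulrDr scalerDl.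
have E2 : S (qdiff n S T x) = \sum_(k < n.+1) a k *: u k.
  by rewrite /qdiff (lin_sum lS); apply: eq_bigr => k _; rewrite (linZ lS).
have E3 : qdiff n S T (T x) = ((-1) ^+ n) *: iter n.+1 T x +
    \sum_(k < n) a k.+1 *: u k.
  rewrite /qdiff big_ord_recl /= subn0 bin0 mulr1 -iterSr; congr (_ + _).
  apply: eq_bigr => k _ /=; rewrite /bump /= add1n /u /a.
  by rewrite -iterSr subnSK.
have E4 : \sum_(k < n.+1) b k *: u k = - \sum_(k < n) a k.+1 *: u k.
  rewrite big_ord_recr /= /b bin_small // mulr0 scale0r addr0 -sumrN.
  apply: eq_bigr => k _; rewrite /a -scaleNr; congr (_ *: _).
  by rewrite -(subnSK (ltn_ord k)) exprS mulN1r mulNr.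
by rewrite E1 E2 E3 E4 exprS mulN1r scaleNr opprD addrC addrA.
Qed.

Lemma qdiff_shift S T l n x : linear S -> linear T ->
  qdiff n S T (l *: x - T x) = l *: qdiff n S T x - S (qdiff n S T x) + qdiff n.+1 S T x.
Proof.
move=> lS lT; have lD := linear_qdiff n lS lT.
by rewrite (linB lD) (linZ lD) (qdiffS _ _ _ lS) addrA subrK.
Qed.

Lemma bounded_linear_qdiff S T a b n : 0 <= a -> 0 <= b ->
  bounded_linear S a -> bounded_linear T b -> bounded_linear (qdiff n S T) ((a + b) ^+ n).
Proof.
move=> a0 b0 bS bT; elim: n => [|n IH].
  by rewrite expr0; apply: (eq_bounded_linear (qdiff0 S T)); exact: bounded_linear_id.
apply: (eq_bounded_linear (fun x => qdiffS T n x bS.1)).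
rewrite exprS mulrDl [b * _]mulrC.
apply: bounded_linearB; first exact: bounded_linear_comp.
by apply: bounded_linear_comp => //; rewrite exprn_ge0 ?addr_ge0.
Qed.

End QuasiDifference.

Section NeumannSums.
Variables (R : realType) (X : completeNormedModType R[i]).
Variables (S T Rs : X -> X) (l : R[i]).
Hypotheses (lS : linear S) (lT : linear T) (lRs : linear Rs).

Definition left_neumann N v :=
  \sum_(n < N.+1) (-1) ^+ n *: iter n.+1 Rs (qdiff n S T v).

Definition right_neumann N v := \sum_(n < N.+1) qdiff n T S (iter n.+1 Rs v).

Lemma left_neumannE N v :
  left_neumann N (l *: v - T v) - v =
  (-1) ^+ N *: iter N.+1 Rs (qdiff N.+1 S T v) +
  \sum_(n < N.+1) (-1) ^+ n *:
     iter n Rs (Rs (l *: qdiff n S T v - S (qdiff n S T v)) - qdiff n S T v).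
Proof.
pose u n := iter n Rs (qdiff n S T v).
have lI n := linear_iter n lRs.
have term n : iter n.+1 Rs (qdiff n S T (l *: v - T v)) =
    iter n Rs (Rs (l *: qdiff n S T v - S (qdiff n S T v)) - qdiff n S T v) +
    (u n + u n.+1).
  rewrite (qdiff_shift _ _ _ lS lT) (linD (lI n.+1)) iterSr.
  by rewrite /u addrA -(linD (lI n)) subrK.
rewrite /left_neumann; under eq_bigr => n _ do rewrite term scalerDr.
by rewrite big_split /= telescope_alt /u /= qdiff0 addrA addrAC addrK addrC.
Qed.

Lemma right_neumannE N v :
  l *: right_neumann N v - T (right_neumann N v) - v =
  - qdiff N.+1 T S (iter N.+1 Rs v) +
  \sum_(n < N.+1)
     qdiff n T S (l *: Rs (iter n Rs v) - S (Rs (iter n Rs v)) - iter n Rs v).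
Proof.
pose u n := qdiff n T S (iter n Rs v).
have lE n := linear_qdiff n lT lS.
have term n : l *: qdiff n T S (iter n.+1 Rs v) - T (qdiff n T S (iter n.+1 Rs v)) =
    qdiff n T S (l *: Rs (iter n Rs v) - S (Rs (iter n Rs v)) - iter n Rs v) +
    (u n - u n.+1).
  by rewrite (linB (lE n)) /u -iterS addrA subrK (qdiff_shift _ _ _ lT lS) addrK.
rewrite /right_neumann scaler_sumr (lin_sum lT) -sumrB.
under eq_bigr => n _ do rewrite term.
by rewrite big_split /= telescope_sub /u /= qdiff0 addrCA [v + _]addrC addrK addrC.
Qed.

End NeumannSums.

Lemma sum_halfX_le2 (R : realType) N : \sum_(n < N) (2^-1 : R) ^+ n <= 2.
Proof.
have half0 : (0 : R) < 2^-1 by lra.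
have half1 : `|2^-1 : R| < 1 by rewrite gtr0_norm //; lra.
have := geometric_le_lim N ler01 half0 half1.
have -> : 1 / (1 - 2^-1) = 2 :> R by field.
by rewrite /series /= -(big_mkord xpredT); under eq_bigr do rewrite mul1r.
Qed.

Lemma bounded_linear_sum_halfX (R : realType) (X : completeNormedModType R[i])
    n (F : 'I_n -> X -> X) k : 0 <= k ->
  (forall i, bounded_linear (F i) (k * 2^-1 ^+ i)) ->
  bounded_linear (fun x => \sum_(i < n) F i x) (2 * k).
Proof.
move=> k0 bF; apply: bounded_linear_le (bounded_linear_sum bF).
by rewrite -mulr_sumr [2 * k]mulrC ler_wpM2l ?sum_halfX_le2.
Qed.

Section NeumannBounds.
Variables (R : realType) (X : completeNormedModType R[i]).
Variables (S T Rs : X -> X) (l : R[i]) (M rho Lam : R).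
Hypotheses (lS : linear S) (lT : linear T) (bRs : bounded_linear Rs M).
Hypotheses (M_gt0 : 0 < M) (Lam0 : 0 <= Lam) (Mrho : M * rho = 2^-1).

Let M0 : 0 <= M. Proof. exact: ltW. Qed.

Let rho0 : 0 <= rho.
Proof. by rewrite -(pmulr_rge0 rho M_gt0) Mrho invr_ge0 ler0n. Qed.

Let geometric_weight n : M ^+ n * (Lam * rho ^+ n) = Lam * 2^-1 ^+ n.
Proof. by rewrite mulrCA -exprMn Mrho. Qed.

Let geometric_weightr n : Lam * rho ^+ n * M ^+ n = Lam * 2^-1 ^+ n.
Proof. by rewrite mulrC geometric_weight. Qed.

Lemma bounded_linear_left_neumann N :
  (forall n, (n <= N)%N -> bounded_linear (qdiff n S T) (Lam * rho ^+ n)) ->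
  bounded_linear (left_neumann S T Rs N) (2 * (M * Lam)).
Proof.
move=> bD; apply: bounded_linear_sum_halfX => [|n]; first exact: mulr_ge0.
have bDn := bD n (ltnSE (ltn_ord n)).
have bRD := bounded_linear_comp (exprn_ge0 n.+1 M0) (bounded_linear_iter n.+1 M0 bRs) bDn.
apply: bounded_linear_le (bounded_linearZ _ bRD).
by rewrite cnormN1X mul1r exprS -mulrA geometric_weight mulrA.
Qed.

Lemma bounded_linear_left_neumann_error N e : 0 <= e ->
  (forall n, (n <= N.+1)%N -> bounded_linear (qdiff n S T) (Lam * rho ^+ n)) ->
  bounded_linear (fun w => Rs (l *: w - S w) - w) e ->
  bounded_linear (fun v => left_neumann S T Rs N (l *: v - T v) - v)
    (Lam * 2^-1 ^+ N.+1 + 2 * (Lam * e)).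
Proof.
move=> e0 bD bE; apply: (eq_bounded_linear (left_neumannE l lS lT bRs.1 N)).
apply: bounded_linearD.
  have bRD := bounded_linear_comp (exprn_ge0 N.+1 M0) (bounded_linear_iter N.+1 M0 bRs)
    (bD N.+1 (leqnn _)).
  apply: bounded_linear_le (bounded_linearZ _ bRD).
  by rewrite cnormN1X mul1r geometric_weight.
apply: bounded_linear_sum_halfX => [|n]; first exact: mulr_ge0.
have bEDn := bounded_linear_comp e0 bE (bD n (ltnW (ltn_ord n))).
have bREDn := bounded_linear_comp (exprn_ge0 n M0) (bounded_linear_iter n M0 bRs) bEDn.
apply: bounded_linear_le (bounded_linearZ _ bREDn).
by rewrite cnormN1X mul1r mulrCA geometric_weight mulrCA mulrA.
Qed.

Lemma bounded_linear_right_neumann N :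
  (forall n, (n <= N)%N -> bounded_linear (qdiff n T S) (Lam * rho ^+ n)) ->
  bounded_linear (right_neumann S T Rs N) (2 * (M * Lam)).
Proof.
move=> bE; apply: bounded_linear_sum_halfX => [|n]; first exact: mulr_ge0.
have bEn := bE n (ltnSE (ltn_ord n)).
apply: bounded_linear_le (bounded_linear_comp _ bEn (bounded_linear_iter n.+1 M0 bRs)).
  by rewrite exprS mulrCA geometric_weightr mulrA.
by rewrite mulr_ge0 ?exprn_ge0.
Qed.

Lemma bounded_linear_right_neumann_error N e : 0 <= e ->
  (forall n, (n <= N.+1)%N -> bounded_linear (qdiff n T S) (Lam * rho ^+ n)) ->
  bounded_linear (fun w => l *: Rs w - S (Rs w) - w) e ->
  bounded_linear
    (fun v => l *: right_neumann S T Rs N v - T (right_neumann S T Rs N v) - v)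
    (Lam * 2^-1 ^+ N.+1 + 2 * (Lam * e)).
Proof.
move=> e0 bE bF; apply: (eq_bounded_linear (right_neumannE Rs l lS lT N)).
have bEn n : (n <= N.+1)%N -> 0 <= Lam * rho ^+ n.
  by move=> _; rewrite mulr_ge0 ?exprn_ge0.
apply: bounded_linearD.
  have bER := bounded_linear_comp (bEn _ (leqnn _)) (bE N.+1 (leqnn _))
    (bounded_linear_iter N.+1 M0 bRs).
  by apply: bounded_linear_le (bounded_linearN bER); rewrite geometric_weightr.
apply: bounded_linear_sum_halfX => [|n]; first exact: mulr_ge0.
have nN : (n <= N.+1)%N := ltnW (ltn_ord n).
have bFR := bounded_linear_comp e0 bF (bounded_linear_iter n M0 bRs).
apply: bounded_linear_le (bounded_linear_comp (bEn n nN) (bE n nN) bFR).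
by rewrite mulrCA geometric_weightr mulrCA mulrA.
Qed.

End NeumannBounds.

Section RightLimitAtZero.
Variable R : realType.

Lemma near_right0_ex (P : R -> Prop) : (\forall h \near (0 : R)^'+, P h) ->
  exists2 d : R, 0 < d & forall h, 0 < h < d -> P h.
Proof.
case=> d /= d0 dP; exists d => // h /andP[h0 hd]; apply: dP => //=.
by rewrite sub0r normrN gtr0_norm.
Qed.

Lemma near_right0_unit : \forall h \near (0 : R)^'+, 0 < h <= 1.
Proof.
near=> h; apply/andP; split; near: h; [exact: nbhs_right_gt | exact: nbhs_right_le].
Unshelve. all: by end_near.
Qed.

Lemma cvg_at_right0_scale (b : R -> R) k : b @ (0 : R)^'+ --> (0 : R) ->
  (fun h => k * b h) @ (0 : R)^'+ --> (0 : R).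
Proof.
move=> b0; have FF : Filter ((0 : R)^'+) by exact: at_right_proper_filter.
by have := cvgMl_tmp (FF := FF) (a := k) b0; rewrite mulr0.
Qed.

Lemma cvg_at_right0_lincomb (b1 b2 : R -> R) k1 k2 :
  b1 @ (0 : R)^'+ --> (0 : R) -> b2 @ (0 : R)^'+ --> (0 : R) ->
  (fun h => k1 * b1 h + k2 * b2 h) @ (0 : R)^'+ --> (0 : R).
Proof.
move=> /(cvg_at_right0_scale k1) b10 /(cvg_at_right0_scale k2) b20.
have FF : Filter ((0 : R)^'+) by exact: at_right_proper_filter.
by have := cvgD (FF := FF) b10 b20; rewrite addr0.
Qed.

Section Limsup.
Variables (f : R -> R) (C : R).
Hypothesis f_bnd : forall h, 0 < h <= 1 -> 0 <= f h <= C.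

Let window d := [set f h | h in [set h : R | 0 < h < d]].

Let le_sup_window d h : d <= 1 -> 0 < h < d -> f h <= sup (window d).
Proof.
move=> d1 hd; apply: ub_le_sup; last by exists h.
exists C => _ [x /andP[x0 xd] <-].
have x01 : 0 < x <= 1 by rewrite x0 (ltW (lt_le_trans xd d1)).
by case/andP: (f_bnd x01).
Qed.

Let windows := [set sup (window d) | d in [set d : R | 0 < d <= 1]].

Let windows_neq0 : windows !=set0.
Proof. by exists (sup (window 1)), 1 => //=; rewrite ltr01 lexx. Qed.

Let windows_ge0 : lbound windows 0.
Proof.
move=> _ [d /andP[d0 d1] <-].
have hd : 0 < d / 2 < d by rewrite divr_gt0 //= ltr_pdivrMr // ltr_pMr // ltr1n.
have /andP[h0 h1] := hd.
have h01 : 0 < d / 2 <= 1 by rewrite h0 (ltW (lt_le_trans h1 d1)).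
by case/andP: (f_bnd h01) => f0 _; apply: le_trans f0 (le_sup_window d1 hd).
Qed.

Lemma limsup0_ge0 : 0 <= limsup0 f.
Proof. exact: lb_le_inf windows_neq0 windows_ge0. Qed.

Lemma near_lt_limsup0 e : 0 < e -> \forall h \near (0 : R)^'+, f h < limsup0 f + e.
Proof.
move=> e0; have has_inf_windows : has_inf windows by split; [|exists 0].
have [_ [d /andP[d0 d1] <-] lt_e] := inf_adherent e0 has_inf_windows.
near=> h; apply: le_lt_trans lt_e; apply: le_sup_window d1 _.
by apply/andP; split; near: h; [exact: nbhs_right_gt | exact: nbhs_right_lt].
Unshelve. all: by end_near.
Qed.

End Limsup.
End RightLimitAtZero.

Lemma le_exprn_root (R : realType) (a r : R) n : 0 <= a -> (0 < n)%N ->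
  a `^ n%:R^-1 <= r -> a <= r ^+ n.
Proof.
move=> a0 n0 ar; have rootK : (a `^ n%:R^-1) ^+ n = a.
  by rewrite -powR_mulrn ?powR_ge0 // -powRrM mulVf ?powRr1 // pnatr_eq0 -lt0n.
by rewrite -{1}rootK lerXn2r ?nnegrE ?powR_ge0 // (le_trans (powR_ge0 _ _) ar).
Qed.

Section QuasinilpotentBound.
Variables (R : realType) (X : completeNormedModType R[i]) (S T : R -> X -> X).
Hypotheses (cS : Cb S) (cT : Cb T).

Lemma Cb_qdiff : exists2 K, 0 <= K &
  forall n h, 0 < h <= 1 -> bounded_linear (qdiff n (S h) (T h)) (K ^+ n).
Proof.
have [KS KS0 bS] := Cb_bounded_linear cS; have [KT KT0 bT] := Cb_bounded_linear cT.
exists (KS + KT) => [|n h h01]; first by rewrite addr_ge0 ?ltW.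
exact: bounded_linear_qdiff (ltW KS0) (ltW KT0) (bS h h01) (bT h h01).
Qed.

Lemma limsup0_qdiff_le rho : aqn_one_side S T -> 0 < rho ->
  \forall n \near \oo, limsup0 (fun h => opnorm (qdiff n (S h) (T h))) <= rho ^+ n.
Proof.
move=> ST rho0; have [K K0 bD] := Cb_qdiff.
near=> n; apply: le_exprn_root.
- by apply: limsup0_ge0 => h h01; exact: opnorm_ge0_le (exprn_ge0 n K0) (bD n h h01).
- by near: n; exact: nbhs_infty_gt.
rewrite -[_ `^ _]ger0_norm ?powR_ge0 // ltW //.
by near: n; exact: cvgr0_norm_lt ST _ rho0.
Unshelve. all: by end_near.
Qed.

Lemma qdiff_geometric_bound rho : aqn_one_side S T -> 0 < rho ->
  exists2 Lam, 0 <= Lam & forall N, \forall h \near (0 : R)^'+,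
    forall n, (n <= N)%N -> bounded_linear (qdiff n (S h) (T h)) (Lam * rho ^+ n).
Proof.
move=> ST rho0; have [K K0 bD] := Cb_qdiff.
have [n1 _ q_le] := limsup0_qdiff_le ST rho0.
have q_bnd n h (h01 : 0 < h <= 1) := opnorm_ge0_le (exprn_ge0 n K0) (bD n h h01).
(* The finitely many [n < n1] are handled by the crude bound [K ^+ n]. *)
pose Lam := 2 + \sum_(n < n1) (K / rho) ^+ n.
have ratio_ge0 n : 0 <= (K / rho) ^+ n by exact: exprn_ge0 (divr_ge0 K0 (ltW rho0)).
have Lam_ge2 : 2 <= Lam by rewrite lerDl sumr_ge0.
have Lam_ge n : (n < n1)%N -> (K / rho) ^+ n <= Lam.
  move=> nn1; rewrite /Lam (bigD1 (Ordinal nn1)) //= addrCA lerDl.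
  by rewrite addr_ge0 ?sumr_ge0.
have bD_near n : \forall h \near (0 : R)^'+,
    bounded_linear (qdiff n (S h) (T h)) (Lam * rho ^+ n).
  near=> h; have h01 : 0 < h <= 1 by near: h; exact: near_right0_unit.
  have [n1n|nn1] := leqP n1 n; last first.
    apply: bounded_linear_le (bD n h h01).
    rewrite -[K](divfK (lt0r_neq0 rho0)) exprMn ler_wpM2r ?Lam_ge //.
    exact: exprn_ge0 (ltW rho0).
  have opnorm_lt : opnorm (qdiff n (S h) (T h)) <
      limsup0 (fun h => opnorm (qdiff n (S h) (T h))) + rho ^+ n.
    by near: h; move: (near_lt_limsup0 (q_bnd n) (exprn_gt0 n rho0)).
  apply: bounded_linear_le (bounded_linear_opnorm (bD n h h01)).
  rewrite (le_trans (ltW opnorm_lt)) // (le_trans (lerD (q_le n n1n) (lexx _))) //.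
  by rewrite -mulr2n -mulr_natl ler_pM2r ?exprn_gt0.
exists Lam; first exact: le_trans Lam_ge2.
move=> N; near=> h => n nN.
suff bDh : forall i : 'I_N.+1, bounded_linear (qdiff i (S h) (T h)) (Lam * rho ^+ i).
  exact: bDh (Ordinal (nN : (n < N.+1)%N)).
by near: h; apply: filter_forall => i; exact: bD_near.
Unshelve. all: by end_near.
Qed.

End QuasinilpotentBound.

Lemma near_max_index (R : realType) (d : nat -> R) : (forall k, 0 < d k) ->
  exists kh : R -> nat, (forall h, h < d 0%N -> h < d (kh h)) /\
    forall K, \forall h \near (0 : R)^'+, (K <= kh h)%N.
Proof.
move=> d_gt0.
(* [kh h] is the largest index below [1/h] whose threshold exceeds [h]; the cap
   keeps the maximum finite and forces [kh h] to grow as [h] tends to 0. *)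
pose good h := [pred j : 'I_(Num.truncn h^-1).+1 | h < d j].
exists (fun h => (\max_(j in good h) j)%N); split=> [h hd0|K].
  have [|j hj ->] := eq_bigmax_cond (A := good h) (@nat_of_ord _); last exact: hj.
  by apply/card_gt0P; exists ord0.
have Kpos : 0 < K.+1%:R^-1 :> R by rewrite invr_gt0 ltr0n.
near=> h.
have hd : forall j : 'I_K.+1, h < d j.
  by near: h; apply: filter_forall => j; exact: nbhs_right_lt.
have hK1 : h < K.+1%:R^-1 by near: h; exact: nbhs_right_lt Kpos.
have h0 : 0 < h by near: h; exact: nbhs_right_gt.
have hK : (K <= Num.truncn h^-1)%N.
  rewrite truncn_ge_nat; last by rewrite invr_ge0 ltW.
  rewrite (le_trans _ (ltW (_ : K.+1%:R < h^-1))) ?ler_nat //.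
  by rewrite -[K.+1%:R]invrK ltf_pV2 ?posrE ?invr_gt0 ?ltr0n.
exact: (leq_bigmax_cond (P := mem (good h)) (F := @nat_of_ord _)
  (Ordinal (hK : (K < (Num.truncn h^-1).+1)%N)) (hd ord_max)).
Unshelve. all: by end_near.
Qed.

Section Diagonal.
Variables (R : realType) (X : completeNormedModType R[i]).

Lemma diagonal_family (F : nat -> R -> X -> X) (err : R -> (X -> X) -> R) C :
  0 <= C -> (forall h g, 0 <= err h g) ->
  (forall k, \forall h \near (0 : R)^'+,
     bounded_linear (F k h) C /\ err h (F k h) <= k.+1%:R^-1) ->
  exists G, Cb G /\ (fun h => err h (G h)) @ (0 : R)^'+ --> (0 : R).
Proof.
move=> C0 err0 FP.
have /choice [d dP] : forall k, exists d : R, 0 < d /\ forall h, 0 < h < d ->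
    bounded_linear (F k h) C /\ err h (F k h) <= k.+1%:R^-1.
  by move=> k; have [d d0 dP] := near_right0_ex (FP k); exists d.
have [kh [kh_good kh_large]] := near_max_index (fun k => (dP k).1).
pose G h := if h < d 0%N then F (kh h) h else fun=> 0.
have G_good h : 0 < h < d 0%N ->
    bounded_linear (G h) C /\ err h (G h) <= (kh h).+1%:R^-1.
  by move=> /andP[h0 hd0]; rewrite /G hd0; apply: (dP _).2; rewrite h0 kh_good.
exists G; split.
  apply: (bounded_linear_Cb C0) => h /andP[h0 _].
  have [hd0|] := boolP (h < d 0%N); first by case: (G_good h); rewrite ?h0.
  by rewrite /G => /negbTE ->; exact: (bounded_linear_le C0 (@bounded_linear0 _ X)).
apply/cvgr0Pnorm_lt => e e0; have [K] := ltr_add_invr e0; rewrite add0r => Ke.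
near=> h.
have hd0 : 0 < h < d 0%N.
  by apply/andP; split; near: h; [exact: nbhs_right_gt | exact: nbhs_right_lt (dP 0%N).1].
have Kkh : (K <= kh h)%N by near: h; exact: kh_large.
have [_ errG] := G_good h hd0.
rewrite ger0_norm //; apply: le_lt_trans errG (le_lt_trans _ Ke).
by rewrite lef_pV2 ?posrE ?ltr0n // ler_nat ltnS.
Unshelve. all: by end_near.
Qed.

Lemma diagonal_family_tail (F : nat -> R -> X -> X) (err : R -> (X -> X) -> R) C
    (a : nat -> R) (b : R -> R) :
  0 <= C -> (forall h g, 0 <= err h g) ->
  a @ \oo --> (0 : R) -> b @ (0 : R)^'+ --> (0 : R) ->
  (forall N, \forall h \near (0 : R)^'+,
     bounded_linear (F N h) C /\ err h (F N h) <= a N + b h) ->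
  exists G, Cb G /\ (fun h => err h (G h)) @ (0 : R)^'+ --> (0 : R).
Proof.
move=> C0 err0 a0 b0 FP.
have eps_gt0 k : 0 < k.+1%:R^-1 / 2 :> R by rewrite divr_gt0 ?invr_gt0 ?ltr0n.
have /choice [N aN] : forall k, exists N, a N < k.+1%:R^-1 / 2.
  move=> k; have [N _ aN] := cvgr0_norm_lt _ a0 _ (eps_gt0 k).
  by exists N; apply: le_lt_trans (ler_norm _) (aN N (leqnn N)).
apply: (diagonal_family (F := fun k => F (N k)) C0 err0) => k.
apply: (filterS2 _ _ (FP (N k)) (cvgr0_norm_lt _ b0 _ (eps_gt0 k))) => h [bF errF] bh.
split=> //; apply: le_trans errF _; rewrite [k.+1%:R^-1]splitr.
by apply: lerD; apply: ltW => //; apply: le_lt_trans (ler_norm _) bh.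
Qed.

End Diagonal.

Section ApproximateInverses.
Variables (R : realType) (X : completeNormedModType R[i]).
Implicit Types (S T G : R -> X -> X) (l : R[i]).

Definition left_approx_inv T G l := Cb G /\
  (fun h => opnorm (fun x => G h (l *: x - T h x) - x)) @ (0 : R)^'+ --> (0 : R).

Definition right_approx_inv T G l := Cb G /\
  (fun h => opnorm (fun x => l *: G h x - T h (G h x) - x)) @ (0 : R)^'+ --> (0 : R).

Lemma bounded_linear_shift (F : X -> X) c l : bounded_linear F c ->
  bounded_linear (fun x => l *: x - F x) (cnorm l + c).
Proof.
move=> bF; have := bounded_linearB (bounded_linearZ l (@bounded_linear_id _ X)) bF.
by rewrite mulr1.
Qed.

Lemma cvg_half_geometric (Lam : R) :
  (fun N => Lam * 2^-1 ^+ N.+1) @ \oo --> (0 : R).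
Proof.
have -> : (fun N => Lam * 2^-1 ^+ N.+1) = geometric (Lam / 2) 2^-1.
  by apply/funext => N; rewrite /geometric /= exprS mulrA.
by apply: cvg_geometric; rewrite gtr0_norm; lra.
Qed.

Lemma left_approx_inv_transfer S T Rs l : Cb S -> Cb T -> aqn_one_side S T ->
  left_approx_inv S Rs l -> exists G, left_approx_inv T G l.
Proof.
move=> cS cT ST [cRs RsS].
have [KS _ bS] := Cb_bounded_linear cS; have [KT _ bT] := Cb_bounded_linear cT.
have [M M_gt0 bRs] := Cb_bounded_linear cRs.
have [rho rho_gt0 Mrho] : exists2 rho, 0 < rho & M * rho = 2^-1.
  by exists (2 * M)^-1; rewrite ?invr_gt0 ?mulr_gt0 // invfM mulrCA mulfV ?mulr1 ?gt_eqF.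
have [Lam Lam0 bD] := qdiff_geometric_bound cS cT ST rho_gt0.
apply: (diagonal_family_tail (F := fun N h => left_neumann (S h) (T h) (Rs h) N)
  (err := fun h g => opnorm (fun x => g (l *: x - T h x) - x)) (C := 2 * (M * Lam))
  (a := fun N => Lam * 2^-1 ^+ N.+1)
  (b := fun h => 2 * (Lam * opnorm (fun w => Rs h (l *: w - S h w) - w)))).
- by rewrite !mulr_ge0 // ltW.
- by move=> h g; exact: opnorm_ge0.
- exact: cvg_half_geometric.
- exact: cvg_at_right0_scale 2 (cvg_at_right0_scale Lam RsS).
move=> N; near=> h.
have h01 : 0 < h <= 1 by near: h; exact: near_right0_unit.
have bDh : forall n, (n <= N.+1)%N ->
    bounded_linear (qdiff n (S h) (T h)) (Lam * rho ^+ n).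
  by near: h; exact: bD.
have bE := bounded_linear_defect
  (bounded_linear_comp (ltW M_gt0) (bRs h h01) (bounded_linear_shift l (bS h h01))).
split.
  apply: (bounded_linear_left_neumann (bRs h h01) M_gt0 Lam0 Mrho) => n nN.
  exact: bDh n (leqW nN).
apply: opnorm_le; first by rewrite addr_ge0 ?mulr_ge0 ?exprn_ge0 ?opnorm_ge0.
apply: (bounded_linear_left_neumann_error (bS h h01).1 (bT h h01).1 (bRs h h01)
  M_gt0 Lam0 Mrho (opnorm_ge0 _) bDh bE).
Unshelve. all: by end_near.
Qed.


Lemma right_approx_inv_transfer S T Rs l : Cb S -> Cb T -> aqn_one_side T S ->
  right_approx_inv S Rs l -> exists G, right_approx_inv T G l.
Proof.
move=> cS cT TS [cRs SRs].
have [KS KS_gt0 bS] := Cb_bounded_linear cS; have [KT _ bT] := Cb_bounded_linear cT.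
have [M M_gt0 bRs] := Cb_bounded_linear cRs.
have [rho rho_gt0 Mrho] : exists2 rho, 0 < rho & M * rho = 2^-1.
  by exists (2 * M)^-1; rewrite ?invr_gt0 ?mulr_gt0 // invfM mulrCA mulfV ?mulr1 ?gt_eqF.
have [Lam Lam0 bD] := qdiff_geometric_bound cT cS TS rho_gt0.
apply: (diagonal_family_tail (F := fun N h => right_neumann (S h) (T h) (Rs h) N)
  (err := fun h g => opnorm (fun x => l *: g x - T h (g x) - x)) (C := 2 * (M * Lam))
  (a := fun N => Lam * 2^-1 ^+ N.+1)
  (b := fun h => 2 * (Lam * opnorm (fun w => l *: Rs h w - S h (Rs h w) - w)))).
- by rewrite !mulr_ge0 // ltW.
- by move=> h g; exact: opnorm_ge0.
- exact: cvg_half_geometric.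
- exact: cvg_at_right0_scale 2 (cvg_at_right0_scale Lam SRs).
move=> N; near=> h.
have h01 : 0 < h <= 1 by near: h; exact: near_right0_unit.
have bDh : forall n, (n <= N.+1)%N ->
    bounded_linear (qdiff n (T h) (S h)) (Lam * rho ^+ n).
  by near: h; exact: bD.
have c0 : 0 <= cnorm l + KS by rewrite addr_ge0 ?cnorm_ge0 ?ltW.
have bE := bounded_linear_defect
  (bounded_linear_comp c0 (bounded_linear_shift l (bS h h01)) (bRs h h01)).
split.
  apply: (bounded_linear_right_neumann (bRs h h01) M_gt0 Lam0 Mrho) => n nN.
  exact: bDh n (leqW nN).
apply: opnorm_le; first by rewrite addr_ge0 ?mulr_ge0 ?exprn_ge0 ?opnorm_ge0.
apply: (bounded_linear_right_neumann_error (bS h h01).1 (bT h h01).1 (bRs h h01)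
  M_gt0 Lam0 Mrho (opnorm_ge0 _) bDh bE).
Unshelve. all: by end_near.
Qed.

Lemma bounded_linear_approx_inv (B x y : X -> X) cB cx cy e1 e2 :
  0 <= cB -> 0 <= cx -> 0 <= e1 ->
  bounded_linear B cB -> bounded_linear x cx -> bounded_linear y cy ->
  bounded_linear (fun v => x (B v) - v) e1 -> bounded_linear (fun v => B (y v) - v) e2 ->
  bounded_linear (fun v => B (x v) - v) ((1 + cB * cx) * e2 + cB * cy * e1).
Proof.
move=> cB0 cx0 e10 bB bx b_y bxB bBy.
have -> : (1 + cB * cx) * e2 + cB * cy * e1 = e2 + cB * (e1 * cy + cx * e2) by ring.
have splitBx : (fun v => B (x v) - v) =1
    (fun v => B (y v) - v + B (x (B (y v)) - y v - x (B (y v) - v))).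
  move=> v; have -> : x (B (y v)) - y v - x (B (y v) - v) = x v - y v.
    by rewrite (linB bx.1) opprB addrC addrA subrK.
  by apply/esym; rewrite (linB bB.1) addrC addrA subrK.
apply: (eq_bounded_linear splitBx).
apply: (bounded_linearD bBy (bounded_linear_comp cB0 bB (bounded_linearB _ _))).
  exact: bounded_linear_comp e10 bxB b_y.
exact: bounded_linear_comp cx0 bx bBy.
Qed.

Lemma approx_inv_in_resolvent T G H l : Cb T ->
  left_approx_inv T G l -> right_approx_inv T H l -> in_resolvent T l.
Proof.
move=> cT [cG GT] [cH TH]; exists G; split=> //; split=> //.
have [K K_gt0 bT] := Cb_bounded_linear cT.
have [cx cx_gt0 bG] := Cb_bounded_linear cG.
have [cy cy_gt0 bH] := Cb_bounded_linear cH.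
have c0 : 0 <= cnorm l + K by rewrite addr_ge0 ?cnorm_ge0 ?ltW.
have k1 : 0 <= 1 + (cnorm l + K) * cx by rewrite addr_ge0 ?ler01 ?mulr_ge0 // ltW.
have k2 : 0 <= (cnorm l + K) * cy by rewrite mulr_ge0 // ltW.
apply: (squeeze_cvgr _ (cvg_cst 0)
  (cvg_at_right0_lincomb (1 + (cnorm l + K) * cx) ((cnorm l + K) * cy) TH GT)).
near=> h.
have h01 : 0 < h <= 1 by near: h; exact: near_right0_unit.
have bB := bounded_linear_shift l (bT h h01).
apply/andP; split; first exact: opnorm_ge0.
apply: opnorm_le.
  by apply: addr_ge0; apply: mulr_ge0 => //; exact: opnorm_ge0.
apply: (bounded_linear_approx_inv c0 (ltW cx_gt0) (opnorm_ge0 _) bB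
  (bG h h01) (bH h h01)).
  exact: bounded_linear_defect (bounded_linear_comp (ltW cx_gt0) (bG h h01) bB).
exact: bounded_linear_defect (bounded_linear_comp c0 bB (bH h h01)).
Unshelve. all: by end_near.
Qed.

Lemma in_resolvent_transfer S T l : Cb S -> Cb T -> asympt_quasinilp_equiv S T ->
  in_resolvent S l -> in_resolvent T l.
Proof.
move=> cS cT [ST TS] [Rs [cRs [SRs RsS]]].
have [G GT] := left_approx_inv_transfer cS cT ST (conj cRs RsS).
have [H TH] := right_approx_inv_transfer cS cT TS (conj cRs SRs).
exact: approx_inv_in_resolvent cT GT TH.
Qed.

End ApproximateInverses.

Theorem theorem26 (R : realType) (X : completeNormedModType R[i])
    (S T : R -> X -> X) :
  Cb S -> Cb T -> asympt_quasinilp_equiv S T -> Sp T = Sp S.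
Proof.
move=> cS cT [ST TS]; rewrite /Sp; congr (~` _); apply/seteqP; split=> l /=.
  exact: in_resolvent_transfer cT cS (conj TS ST).
exact: in_resolvent_transfer cS cT (conj ST TS).
Qed.
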